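(* For every integer $r\ge 0$, $\mathrm{LCD}[6r+5,2] < 4r+3$.
   Context: All codes are binary linear codes, i.e. subspaces of $\mathbb{F}_2^n$; an $[n,k,d]$ code is one of length $n$, dimension $k$ and minimum Hamming distance $d$. A linear code $C$ is an LCD code if $C\cap C^\perp=\{0\}$, where $C^\perp$ is the dual with respect to the standard dot product. For positive integers $n\ge k$, $\mathrm{LCD}[n,k]$ denotes the largest $d$ such that there exists a binary $[n,k,d]$ LCD code. *)

From mathcomp Require Import all_boot all_order all_algebra.
Set Implicit Arguments. Unset Strict Implicit. Unset Printing Implicit Defensive.
Import GRing.Theory.
Local Open Scope ring_scope.

(* A binary linear code of length n is represented by a square matrix
   A : 'M['F_2]_n whose row space (in the sense of mxalgebra) is the code.
   Codewords are the row vectors u with (u <= A)%MS; the dimension is \rank A. *)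

Definition wt n (u : 'rV['F_2]_n) : nat := #|[set j : 'I_n | u 0 j != 0]|.

Definition dual_code n (A : 'M['F_2]_n) : 'M['F_2]_n := kermx A^T.

Definition is_LCD n (A : 'M['F_2]_n) : bool := ((A :&: dual_code A)%MS == (0 : 'M['F_2]_n))%MS.

Definition min_dist n (A : 'M['F_2]_n) : nat :=
  \big[maxn/0%N]_(d < n.+1 | [forall u : 'rV['F_2]_n,
       ((u <= A)%MS && (u != 0)) ==> (d <= wt u)%N]) (d : nat).

Definition LCDmax (n k : nat) : nat :=
  \big[maxn/0%N]_(A : 'M['F_2]_n | (\rank A == k)%N && is_LCD A) min_dist A.

From mathcomp Require Import all_boot all_order all_algebra zify.
Set Implicit Arguments. Unset Strict Implicit.
Import GRing.Theory.
Local Open Scope ring_scope.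

(* Let u, v be a basis of a two-dimensional binary code and c the number of
   positions where both are nonzero.  Then wt (u + v) = wt u + wt v - 2c, and the
   dot products of u, v, u + v with u and v are the parities of wt u, c, wt v,
   wt u + c and c + wt v.  If all three nonzero codewords had weight at least
   4r+3 in length at most 6r+5, (wt u, wt v, c) would be one of three explicit
   triples, and in each case one of u, v, u + v is orthogonal to the whole code,
   i.e. a nonzero vector of C ∩ C^⊥. *)

Definition supp n (u : 'rV['F_2]_n) : {set 'I_n} := [set j | u 0 j != 0].

Lemma wtE n (u : 'rV['F_2]_n) : wt u = #|supp u|.
Proof. by []. Qed.

Lemma F2_cases (x : 'F_2) : x = 0 \/ x = 1.
Proof.
have : (x == 0) || (x == 1) by case: x => -[|[|m]].
by case/orP => /eqP; [left | right].
Qed.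

Lemma natr_F2 m : (m%:R : 'F_2) = (odd m)%:R.
Proof. by rewrite -(Fp_nat_mod (isT : prime 2)) modn2. Qed.

Lemma dotmx_F2 n (u v : 'rV['F_2]_n) : (u *m v^T) 0 0 = #|supp u :&: supp v|%:R.
Proof.
rewrite !mxE -sum1_card natr_sum [in RHS]big_mkcond /=.
apply: eq_bigr => j _; rewrite !mxE !inE.
by case: (F2_cases (u 0 j)) => ->; case: (F2_cases (v 0 j)) => ->; apply/eqP.
Qed.

Lemma mx11_F2_even_eq0 (M : 'M['F_2]_1) m : ~~ odd m -> M 0 0 = m%:R -> M = 0.
Proof.
by move=> m_even M00; rewrite [M]mx11_scalar M00 natr_F2 (negPf m_even) raddf0.
Qed.

Lemma supp_add n (u v : 'rV['F_2]_n) :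
  supp (u + v) = (supp u :|: supp v) :\: (supp u :&: supp v).
Proof.
apply/setP => j; rewrite !inE mxE.
by case: (F2_cases (u 0 j)) => ->; case: (F2_cases (v 0 j)) => ->.
Qed.

Lemma wt_add n (u v : 'rV['F_2]_n) :
  (wt (u + v) + #|supp u :&: supp v|.*2 = wt u + wt v)%N.
Proof.
have sub : supp u :&: supp v \subset supp u :|: supp v.
  exact: subset_trans (subsetIl _ _) (subsetUl _ _).
by rewrite !wtE supp_add (cardsDS sub) -addnn addnA subnK ?subset_leq_card // cardsUI.
Qed.

Lemma wt_add_le n (u v : 'rV['F_2]_n) : (wt u + wt v <= n + #|supp u :&: supp v|)%N.
Proof. by rewrite !wtE -cardsUI leq_add2r -[X in (_ <= X)%N]card_ord max_card. Qed.

Lemma min_dist_le_wt n (A : 'M['F_2]_n) (u : 'rV_n) :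
  (u <= A)%MS -> u != 0 -> (min_dist A <= wt u)%N.
Proof.
move=> uA u0; apply/bigmax_leqP => d /forallP/(_ u).
by rewrite uA u0.
Qed.

Lemma dual_codeword_not_LCD m n (A : 'M['F_2]_n) (B : 'M_(m, n)) (w : 'rV_n) :
  (A <= B)%MS -> (w <= A)%MS -> w != 0 -> w *m B^T = 0 -> ~~ is_LCD A.
Proof.
move=> /submxP[D eA] wA w0 wB; apply/negP => /andP[hull0 _].
have : (w <= A :&: dual_code A)%MS.
  by rewrite sub_capmx wA /dual_code sub_kermx eA trmx_mul mulmxA wB mul0mx eqxx.
by move/submx_trans/(_ hull0); rewrite submx0 (negPf w0).
Qed.

Lemma rank2_basis (F : fieldType) n (A : 'M[F]_n) : (\rank A = 2)%N ->
  exists u v : 'rV_n, [/\ (col_mx u v == A)%MS, u != 0, v != 0 & u + v != 0].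
Proof.
move=> rkA; have /rowV0Pn[u uA u0] : A != 0 by rewrite -mxrank_eq0 rkA.
have /row_subPn[i viu] : ~~ (A <= u)%MS.
  by apply/negP => /mxrankS; rewrite rkA rank_rV u0.
set v := row i A in viu; exists u, v.
have v0 : v != 0 by apply: contraNneq viu => ->; rewrite sub0mx.
have uv0 : u + v != 0.
  by apply: contraNneq viu => /(canRL (addKr u))->; rewrite addr0 eqmx_opp.
split=> //; rewrite /eqmx col_mx_sub uA row_sub /=.
rewrite -(geq_leqif (mxrank_leqif_sup _)) ?col_mx_sub ?uA ?row_sub // rkA.
have : (\rank u < \rank (col_mx u v))%N.
  rewrite (ltn_leqif (mxrank_leqif_sup _)) -?addsmxE ?addsmxSl //.
  by apply: contra viu => /(submx_trans _); apply; rewrite addsmxSr.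
by rewrite rank_rV u0.
Qed.

Lemma overlap_parity r x y z c :
  (z + c.*2 = x + y)%N -> (x + y <= 6 * r + 5 + c)%N ->
  (4 * r + 3 <= x)%N -> (4 * r + 3 <= y)%N -> (4 * r + 3 <= z)%N ->
  [|| ~~ odd x && ~~ odd c, ~~ odd c && ~~ odd y | ~~ odd (x + c)%N && ~~ odd (c + y)%N].
Proof.
move=> xyz xyc x_ge y_ge z_ge.
have [[-> [-> ->]] | [[-> [-> ->]] | [-> [-> ->]]]] :
    (x = 4 * r + 4 /\ y = 4 * r + 3 /\ c = 2 * r + 2)%N \/
    (x = 4 * r + 3 /\ y = 4 * r + 4 /\ c = 2 * r + 2)%N \/
    (x = 4 * r + 3 /\ y = 4 * r + 3 /\ c = 2 * r + 1)%N by lia.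
all: by rewrite !oddD; case: (odd r).
Qed.

Lemma rank2_LCD_min_dist_lt r n (A : 'M['F_2]_n) :
  (n <= 6 * r + 5)%N -> (\rank A = 2)%N -> is_LCD A -> (min_dist A < 4 * r + 3)%N.
Proof.
move=> n_le rkA; apply: contraTT; rewrite -leqNgt => dA.
have [u [v [/andP[cA Ac] u0 v0 uv0]]] := rank2_basis rkA.
move: cA; rewrite col_mx_sub => /andP[uA vA].
have uvA := addmx_sub uA vA.
have wt_ge w : (w <= A)%MS -> w != 0 -> (4 * r + 3 <= wt w)%N.
  by move=> wA w0; apply: leq_trans dA (min_dist_le_wt wA w0).
have not_LCD (w : 'rV_n) a b : (w <= A)%MS -> w != 0 -> ~~ odd a -> ~~ odd b ->
    (w *m u^T) 0 0 = a%:R -> (w *m v^T) 0 0 = b%:R -> ~~ is_LCD A.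
  move=> wA w0 a_even b_even wu wv; apply: dual_codeword_not_LCD Ac wA w0 _.
  rewrite tr_col_mx mul_mx_row (mx11_F2_even_eq0 a_even wu).
  by rewrite (mx11_F2_even_eq0 b_even wv) row_mx0.
have wt_le : (wt u + wt v <= 6 * r + 5 + #|supp u :&: supp v|)%N.
  by apply: leq_trans (wt_add_le u v) _; rewrite leq_add2r.
have := overlap_parity (wt_add u v) wt_le
  (wt_ge u uA u0) (wt_ge v vA v0) (wt_ge _ uvA uv0).
rewrite !wtE => /or3P[] /andP[e1 e2].
- by apply: (not_LCD u _ _ uA u0 e1 e2); rewrite dotmx_F2 ?setIid.
- by apply: (not_LCD v _ _ vA v0 e1 e2); rewrite dotmx_F2 ?setIid // setIC.
- by apply: (not_LCD _ _ _ uvA uv0 e1 e2);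
    rewrite mulmxDl mxE !dotmx_F2 natrD setIid // setIC.
Qed.

Theorem proposition2p5 (r : nat) : (LCDmax (6 * r + 5) 2 < 4 * r + 3)%N.
Proof.
rewrite /LCDmax; apply: (big_ind (fun m => m < 4 * r + 3)%N) => [|m1 m2|A /andP[/eqP rkA]].
- by rewrite addn3.
- by rewrite gtn_max => ->.
- exact: rank2_LCD_min_dist_lt.
Qed.
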